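(* For every integer $n\ge 1$, the Fermat number $F_n=2^{2^{n-1}}+1$ is primover to base $2$.
   Context: For an integer $a>1$ and an odd integer $n>1$ with $\gcd(a,n)=1$: $h_a(n)$ denotes the multiplicative order of $a$ modulo $n$. A cyclotomic coset of $a$ modulo $n$ is a set of the form $\{\, s a^j \bmod n : j\ge 0\,\}$ with $s\in\{1,\dots,n-1\}$; these cosets partition $\{1,\dots,n-1\}$, and $r_a(n)$ denotes the number of distinct cyclotomic cosets of $a$ modulo $n$. An odd composite number $n$ coprime to $a$ is called an overpseudoprime to base $a$ if $n=r_a(n)\,h_a(n)+1$. An integer $N>1$ is called primover to base $a$ if it is either prime or an overpseudoprime to base $a$. *)

From mathcomp Require Import all_boot.
Set Implicit Arguments. Unset Strict Implicit. Unset Printing Implicit Defensive.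

(* The search ranges over k in 1..n, which is enough when
   gcd(a,n) = 1 and n > 1 (then h_a(n) <= phi(n) < n). *)
Definition mult_order (a n : nat) : nat :=
  (find (fun k => a ^ k.+1 %% n == 1 %% n) (iota 0 n)).+1.

(* Ranging j over 0..n-1 yields all values, since the sequence (a^j mod n)
   is eventually periodic with preperiod + period <= n (pigeonhole). *)
Definition cyc_coset (a n s : nat) : {set 'I_n} :=
  [set i : 'I_n | [exists j : 'I_n, nat_of_ord i == (s * a ^ j) %% n]].

Definition num_cosets (a n : nat) : nat :=
  #|[set cyc_coset a n (nat_of_ord s) | s in [set s : 'I_n | 0 < nat_of_ord s]]|.

Definition overpseudoprime (a n : nat) : bool :=
  [&& odd n, 1 < n, ~~ prime n, coprime a n &
      n == num_cosets a n * mult_order a n + 1].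

Definition primover (a N : nat) : bool :=
  (1 < N) && (prime N || overpseudoprime a N).

From mathcomp Require Import all_boot zify.
Set Implicit Arguments. Unset Strict Implicit.

(* Let N > 1 be coprime to a and
   let h > 0 satisfy a^h = 1 (mod N), while for every divisor d > 1 of N and
   every k, a^k = 1 (mod d) forces h | k (so a has order exactly h modulo
   every nontrivial divisor of N).  Then, for 0 < x < N, the residues
   x a^j (j < h) are pairwise distinct, so every cyclotomic coset of a
   nonzero residue has exactly h elements; moreover h_a(N) = h.  The cosets
   partition {1, ..., N-1}, hence N = r_a(N) h_a(N) + 1.

   For F = 2^(2^k) + 1 we take h = 2^(k+1): 2^h = 1 (mod F) since
   (2^m)^2 = (2^m - 1)(2^m + 1) + 1, and the order of 2 modulo a divisor
   d > 1 of F divides 2^(k+1) but cannot divide 2^k: otherwise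
   2^(2^k) = 1 (mod d), so 0 = F = 2 (mod d), impossible for the odd d. *)

Section UniformOrder.

Variables (a N h : nat).
Hypotheses (a_coprime : coprime a N) (N_gt1 : 1 < N) (h_gt0 : 0 < h).
Hypothesis h_dvd_order :
  forall d k, 1 < d -> d %| N -> a ^ k %% d = 1 %% d -> h %| k.
Hypothesis expn_h_mod : a ^ h %% N = 1.

Let N_gt0 : 0 < N. Proof. exact: ltnW. Qed.

(* a > 0, as gcd(0, N) = N > 1. *)
Let a_gt0 : 0 < a.
Proof.
by move: a_coprime N_gt1; case: a => // /eqP; rewrite gcd0n => ->.
Qed.

Lemma expn_mod_order j : a ^ j %% N = a ^ (j %% h) %% N.
Proof.
rewrite {1}(divn_eq j h) expnD [j %/ h * h]mulnC expnM -modnMml -modnXm.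
by rewrite expn_h_mod exp1n (modn_small N_gt1) mul1n.
Qed.

Lemma mulexp_mod_order x j : x * a ^ j %% N = x * a ^ (j %% h) %% N.
Proof. by rewrite -modnMmr expn_mod_order modnMmr. Qed.

Lemma expn_mod_eq1 k : (a ^ k %% N == 1 %% N) = (h %| k).
Proof.
apply/eqP/idP; first exact: h_dvd_order N_gt1 (dvdnn N).
move/dvdnP=> [q ->]; rewrite -[a ^ _]mul1n mulexp_mod_order.
by rewrite modnMl expn0.
Qed.

Lemma coset_powers_inj x i j : 0 < x < N -> i < h -> j < h ->
  x * a ^ i %% N = x * a ^ j %% N -> i = j.
Proof.
wlog ij : i j / i <= j => [hyp|/andP[x_gt0 x_ltN] ih jh E].
  have [le|/ltnW le] := leqP i j; first exact: hyp.
  by move=> xN ih jh /esym E; exact: esym (hyp _ _ le xN jh ih E).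
apply/eqP; rewrite eqn_leq ij /= leqNgt; apply/negP => lt_ij.
set c := j - i.
have c_gt0 : 0 < c by rewrite subn_gt0.
have xaj : x * a ^ j = x * a ^ i * a ^ c by rewrite -mulnA -expnD subnKC.
have N_dvd : N %| a ^ i * (x * (a ^ c - 1)).
  have : x * a ^ j == x * a ^ i %[mod N] by rewrite E.
  rewrite eqn_mod_dvd; last by rewrite xaj leq_pmulr // expn_gt0 a_gt0.
  by rewrite xaj -{2}(muln1 (x * a ^ i)) -mulnBr [x * _]mulnC -mulnA.
rewrite Gauss_dvdr in N_dvd; last by rewrite coprime_sym coprimeXl.
(* Either N | x, impossible, or g = gcd(a^c - 1, N) > 1 is a divisor of N
   with a^c = 1 (mod g), forcing h | c, impossible as 0 < c < h. *)
have [cop|ncop] := boolP (coprime (a ^ c - 1) N).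
  rewrite Gauss_dvdl 1?coprime_sym // in N_dvd.
  by move: (dvdn_leq x_gt0 N_dvd); rewrite leqNgt x_ltN.
have g_gt1 : 1 < gcdn (a ^ c - 1) N.
  by rewrite ltn_neqAle eq_sym ncop gcdn_gt0 N_gt0 orbT.
have : h %| c.
  apply: (h_dvd_order g_gt1 (dvdn_gcdr _ _)); apply/eqP.
  by rewrite eqn_mod_dvd ?expn_gt0 ?a_gt0 //; exact: dvdn_gcdl.
by move/(dvdn_leq c_gt0); rewrite leqNgt (leq_ltn_trans (leq_subr _ _) jh).
Qed.

Definition pow_res (x j : nat) : 'I_N := Ordinal (ltn_pmod (x * a ^ j) N_gt0).

(* Taking x = 1: the h distinct powers a^j (j < h) fit in 'I_N, so h <= N. *)
Lemma order_le : h <= N.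
Proof.
have inj : injective (fun j : 'I_h => pow_res 1 j).
  move=> i j /(congr1 val) /= E; apply: val_inj.
  by apply: (coset_powers_inj _ (ltn_ord i) (ltn_ord j) E); rewrite N_gt1.
by have := leq_card _ inj; rewrite !card_ord.
Qed.

Lemma mem_coset (x i : 'I_N) :
  (i \in cyc_coset a N x) <-> exists j, (i : nat) = x * a ^ j %% N.
Proof.
rewrite inE; split; first by case/existsP=> j /eqP ->; exists j.
case=> j ->; apply/existsP.
have lt : j %% h < N by apply: leq_trans (ltn_pmod _ h_gt0) order_le.
by exists (Ordinal lt); rewrite /= mulexp_mod_order.
Qed.

Lemma coset_refl (x : 'I_N) : x \in cyc_coset a N x.
Proof. by apply/mem_coset; exists 0; rewrite muln1 modn_small. Qed.

Lemma coset_trans (x y z : 'I_N) :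
  y \in cyc_coset a N x -> z \in cyc_coset a N y -> z \in cyc_coset a N x.
Proof.
move=> /mem_coset [i ei] /mem_coset [j ej]; apply/mem_coset; exists (i + j).
by rewrite ej ei modnMml expnD mulnA.
Qed.

Lemma coset_sym (x y : 'I_N) :
  y \in cyc_coset a N x -> x \in cyc_coset a N y.
Proof.
move=> /mem_coset [i ei]; apply/mem_coset; exists (h - i %% h).
rewrite ei modnMml -mulnA -expnD mulexp_mod_order.
have -> : (i + (h - i %% h)) %% h = 0.
  rewrite {1}(divn_eq i h) -addnA subnKC; last exact: ltnW (ltn_pmod _ h_gt0).
  by rewrite -{3}(mul1n h) -mulnDl modnMl.
by rewrite muln1 modn_small.
Qed.

Lemma coset_eq (x y : 'I_N) :
  y \in cyc_coset a N x -> cyc_coset a N y = cyc_coset a N x.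
Proof.
move=> yx; apply/setP=> z; apply/idP/idP => [|zx]; first exact: coset_trans.
exact: coset_trans (coset_sym yx) zx.
Qed.

Lemma card_coset (x : 'I_N) : 0 < x -> #|cyc_coset a N x| = h.
Proof.
move=> x_gt0.
have -> : cyc_coset a N x = [set pow_res x j | j : 'I_h].
  apply/setP=> i; apply/idP/imsetP => [/mem_coset [j ej]|[j _ ->]].
    exists (Ordinal (ltn_pmod j h_gt0)) => //.
    by apply: val_inj; rewrite /= ej mulexp_mod_order.
  by apply/mem_coset; exists j.
rewrite card_imset ?card_ord // => i j /(congr1 val) /= E; apply: val_inj.
by apply: (coset_powers_inj _ (ltn_ord i) (ltn_ord j) E); rewrite x_gt0 /=.
Qed.

Lemma mult_order_eq : mult_order a N = h.
Proof.
rewrite /mult_order; set p := (fun k => _).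
have p_dvd k : p k = (h %| k.+1) by rewrite /p expn_mod_eq1.
have h1_lt : h.-1 < N by rewrite prednK // order_le.
have has_p : has p (iota 0 N).
  by apply/hasP; exists h.-1; rewrite ?mem_iota // p_dvd prednK.
have := nth_find 0 has_p.
have find_lt : find p (iota 0 N) < N.
  by rewrite -[X in _ < X](size_iota 0 N) -has_find.
rewrite nth_iota // add0n p_dvd => /(dvdn_leq (ltn0Sn _)) h_le.
apply/eqP; rewrite eqn_leq h_le andbT leqNgt; apply/negP => lt.
have := @before_find _ 0 p (iota 0 N) h.-1.
by rewrite -ltnS prednK // => /(_ lt); rewrite nth_iota // p_dvd prednK ?dvdnn.
Qed.

(* The cosets of the nonzero residues all have size h and partition
   {1, ..., N-1}; hence N = r_a(N) h_a(N) + 1. *)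
Lemma uniform_order_count : N = num_cosets a N * mult_order a N + 1.
Proof.
rewrite mult_order_eq /num_cosets.
set S := [set s : 'I_N | 0 < nat_of_ord s].
set P := [set _ | s in S].
have coset_S (x y : 'I_N) : x \in S -> y \in cyc_coset a N x -> y \in S.
  move=> xS /coset_sym /mem_coset [j ej]; move: xS; rewrite !inE !lt0n.
  by apply: contra => /eqP y0; rewrite ej y0 mul0n mod0n.
have partP : partition P S.
  have -> : P = equivalence_partition (fun x y : 'I_N => y \in cyc_coset a N x) S.
    apply: eq_in_imset => x xS; apply/setP => y; rewrite [RHS]inE.
    by apply/idP/andP => [yx|[]//]; split => //; apply: coset_S yx.
  apply: equivalence_partitionP => x y z _ _ _.
  by split; [exact: coset_refl | move/coset_eq ->].
have cardP : {in P, forall A : {set 'I_N}, #|A| = h}.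
  by move=> A /imsetP [s]; rewrite inE => s_gt0 ->; exact: card_coset.
rewrite -(card_uniform_partition cardP partP).
have compS : ~: S = [set Ordinal N_gt0].
  by apply/setP => i; rewrite !inE -leqNgt leqn0 -val_eqE.
by have := cardsC S; rewrite compS cards1 card_ord addnC => ->.
Qed.

End UniformOrder.

Lemma expn_mul_mod a d i q : a ^ i = 1 %[mod d] -> a ^ (q * i) = 1 %[mod d].
Proof. by move=> ei; rewrite mulnC expnM -modnXm ei modnXm exp1n. Qed.

Lemma expn_gcd_mod a d k l : 0 < k ->
  a ^ k = 1 %[mod d] -> a ^ l = 1 %[mod d] -> a ^ gcdn k l = 1 %[mod d].
Proof.
move=> k_gt0 ek el; case: (egcdnP l k_gt0) => u v E _.
have := expn_mul_mod u ek; rewrite E expnD -modnMml (expn_mul_mod v el).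
by rewrite modnMml mul1n.
Qed.

Lemma sqr_mod_succ t : 0 < t -> t * t %% t.+1 = 1.
Proof.
move=> t_gt0; have -> : t * t = (t - 1) * t.+1 + 1 by nia.
by rewrite modnMDl modn_small.
Qed.

Lemma fermat_expn_order k : 2 ^ (2 ^ k.+1) %% (2 ^ (2 ^ k) + 1) = 1.
Proof. by rewrite expnS mulnC expnM addn1 sqr_mod_succ ?expn_gt0. Qed.

(* No divisor d > 1 of 2^m + 1 (m > 0) satisfies 2^m = 1 modulo d: d would
   divide 2, while d divides the odd number 2^m + 1. *)
Lemma fermat_divisor_expn_neq1 m d : 0 < m -> 1 < d -> d %| 2 ^ m + 1 ->
  2 ^ m %% d != 1 %% d.
Proof.
move=> m_gt0 d_gt1 dF; apply/negP => /eqP em.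
have d_dvd2 : d %| 2 by rewrite /dvdn -[2]/(1 + 1) -modnDml -em modnDml.
have d_odd : odd d by apply: (dvdn_odd dF); rewrite addn1 /= oddX orbF -lt0n.
have := dvdn_leq (isT : 0 < 2) d_dvd2.
by case: d d_gt1 d_odd {dF em d_dvd2} => [|[|[]]].
Qed.

Lemma fermat_divisor_order k d l : 1 < d -> d %| 2 ^ (2 ^ k) + 1 ->
  2 ^ l = 1 %[mod d] -> 2 ^ k.+1 %| l.
Proof.
move=> d_gt1 dF el.
have eh : 2 ^ (2 ^ k.+1) = 1 %[mod d].
  by rewrite -(modn_dvdm _ dF) fermat_expn_order.
have eg := expn_gcd_mod (expn_gt0 2 k.+1) eh el.
have /(dvdn_pfactor _ _ (isT : prime 2)) [j j_le gj] := dvdn_gcdl (2 ^ k.+1) l.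
have [j_lt|j_gt|j_eq] := ltngtP j k.+1.
- have /dvdnP [q eq] : 2 ^ j %| 2 ^ k by rewrite dvdn_exp2l.
  have := expn_mul_mod q eg; rewrite gj -eq => /eqP.
  by rewrite (negbTE (fermat_divisor_expn_neq1 (expn_gt0 2 k) d_gt1 dF)).
- by rewrite ltnNge j_le in j_gt.
- by rewrite -j_eq -gj dvdn_gcdr.
Qed.

Theorem theorem4 (n : nat) (hn : 1 <= n) :
  primover 2 (2 ^ (2 ^ (n - 1)) + 1).
Proof.
case: n hn => // k _; rewrite subn1 /=.
have F_gt1 : 1 < 2 ^ (2 ^ k) + 1 by rewrite addn1 ltnS expn_gt0.
have F_odd : odd (2 ^ (2 ^ k) + 1) by rewrite addn1 /= oddX orbF -lt0n expn_gt0.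
rewrite /primover F_gt1 /=; have [//|F_composite] := boolP (prime _).
rewrite /overpseudoprime F_odd F_gt1 F_composite coprime2n F_odd /=.
apply/eqP/(uniform_order_count (h := 2 ^ k.+1)).
- by rewrite coprime2n.
- exact: F_gt1.
- exact: expn_gt0.
- exact: fermat_divisor_order.
- exact: fermat_expn_order.
Qed.
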